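(* Let $\Sigma$ be a finite alphabet, let $n$ be a positive integer and let $\varphi\in\mathrm{FO}^2_n[<]$ be a unique position formula. Then there are $k\in\mathbb{N}$, pairwise mutually exclusive formulas $\alpha_1,\dots,\alpha_k\in\mathrm{FO}^2_n[<]$ and rankers $r_1,\dots,r_k\in R_n^\star$ such that $$\varphi\equiv\bigvee_{i\in[1,k]}\bigl(\alpha_i\wedge\psi_{r_i}\bigr),$$ where for each ranker $r\in R_n^\star$, $\psi_r\in\mathrm{FO}^2_n[<]$ denotes a formula with free variable $x$ such that for all $w\in\Sigma^\star$ and $i\in[1,|w|]$, $(w,i)\models\psi_r$ iff $i=r(w)$.
   Context: Words are finite structures with universe $\{1,\dots,|w|\}$, unary predicates $Q_a$ ($a\in\Sigma$) marking the positions carrying letter $a$, and the order $<$. $\mathrm{FO}^2_n[<]$ is first-order logic over this signature using only the variables $x,y$, with quantifier depth at most $n$. $(w,i)$ denotes $w$ with $x$ interpreted as $i$. A formula $\varphi\in\mathrm{FO}^2[<]$ with free variable $x$ is a unique position formula if for every $w\in\Sigma^\star$ there is at most one $i\in[1,|w|]$ with $(w,i)\models\varphi$. Boundary positions: for $a\in\Sigma$, $\triangleright_a(w)=\min\{i: w_i=a\}$, $\triangleleft_a(w)=\max\{i: w_i=a\}$, $\triangleright_a(w,q)=\min\{i\in[q+1,|w|]:w_i=a\}$, $\triangleleft_a(w,q)=\max\{i\in[1,q-1]:w_i=a\}$ (undefined if empty). An $n$-ranker is a sequence $r=(p_1,\dots,p_n)$ of boundary positions with $r(w)=p_1(w)$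 if $n=1$, undefined if $(p_1,\dots,p_{n-1})(w)$ is undefined, and $p_n(w,(p_1,\dots,p_{n-1})(w))$ otherwise. $R_n^\star$ is the set of all $i$-rankers for $i\in[1,n]$. *)

From mathcomp Require Import all_boot.
Set Implicit Arguments. Unset Strict Implicit. Unset Printing Implicit Defensive.

Inductive var := VX | VY.

Inductive fo2 (Sigma : Type) :=
  | FTrue
  | FFalse
  | FLetter of Sigma & var
  | FLt of var & var
  | FEq of var & var
  | FNot of fo2 Sigma
  | FAnd of fo2 Sigma & fo2 Sigma
  | FOr of fo2 Sigma & fo2 Sigma
  | FEx of var & fo2 Sigma.

Arguments FTrue {Sigma}.
Arguments FFalse {Sigma}.

Definition var_eqb (u v : var) : bool :=
  match u, v with VX, VX | VY, VY => true | _, _ => false end.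

Fixpoint qdepth (Sigma : Type) (f : fo2 Sigma) : nat :=
  match f with
  | FNot g => qdepth g
  | FAnd g h | FOr g h => maxn (qdepth g) (qdepth h)
  | FEx _ g => (qdepth g).+1
  | _ => 0
  end.

Definition in_FO2n (Sigma : Type) (n : nat) (f : fo2 Sigma) : bool :=
  qdepth f <= n.

Fixpoint free (Sigma : Type) (v : var) (f : fo2 Sigma) : bool :=
  match f with
  | FTrue | FFalse => false
  | FLetter _ u => var_eqb u v
  | FLt u1 u2 | FEq u1 u2 => var_eqb u1 v || var_eqb u2 v
  | FNot g => free v g
  | FAnd g h | FOr g h => free v g || free v h
  | FEx u g => ~~ var_eqb u v && free v g
  end.

Definition only_x (Sigma : Type) (f : fo2 Sigma) : bool := ~~ free VY f.

(* ---------- Semantics over words; positions are 1..|w| ---------- *)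
Section Sem.
Variable Sigma : eqType.
Implicit Types (w : seq Sigma) (f : fo2 Sigma).

Definition letter_at w (i : nat) : option Sigma := onth w i.-1.

Definition in_pos w (i : nat) : bool := (1 <= i) && (i <= size w).

Definition upd (nu : var -> nat) (v : var) (i : nat) : var -> nat :=
  fun u => if var_eqb u v then i else nu u.

Fixpoint sat w (nu : var -> nat) f : Prop :=
  match f with
  | FTrue => True
  | FFalse => False
  | FLetter a v => in_pos w (nu v) /\ letter_at w (nu v) = Some a
  | FLt u v => nu u < nu v
  | FEq u v => nu u = nu v
  | FNot g => ~ sat w nu g
  | FAnd g h => sat w nu g /\ sat w nu h
  | FOr g h => sat w nu g \/ sat w nu h
  | FEx v g => exists i, in_pos w i /\ sat w (upd nu v i) g
  end.

(* (w, i) |= f : x interpreted as i (y is irrelevant for formulas with only x free) *)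
Definition satx w (i : nat) f : Prop := sat w (fun v => if v is VX then i else 0) f.

Definition unique_position f : Prop :=
  only_x f /\
  forall w i j, in_pos w i -> in_pos w j -> satx w i f -> satx w j f -> i = j.

Definition fo2_equiv f g : Prop :=
  forall w i, in_pos w i -> (satx w i f <-> satx w i g).

(* a boundary position: (true, a) is |>_a, (false, a) is <|_a *)
Definition bpos := (bool * Sigma)%type.

Definition positions_with w (a : Sigma) (s : seq nat) : seq nat :=
  [seq i <- s | letter_at w i == Some a].

(* |>_a(w) = min {i : w_i = a},  <|_a(w) = max {i : w_i = a} *)
Definition bpos_abs w (p : bpos) : option nat :=
  let l := positions_with w p.2 (iota 1 (size w)) in
  if p.1 then ohead l else ohead (rev l).

(* |>_a(w,q) = min {i in [q+1,|w|] : w_i = a},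
   <|_a(w,q) = max {i in [1,q-1] : w_i = a} *)
Definition bpos_rel w (p : bpos) (q : nat) : option nat :=
  if p.1 then ohead (positions_with w p.2 (iota q.+1 (size w - q)))
  else ohead (rev (positions_with w p.2 (iota 1 q.-1))).

Definition ranker := seq bpos.

(* r(w) for a ranker r = (p_1,...,p_m); undefined (None) for the empty sequence *)
Definition ranker_eval w (r : ranker) : option nat :=
  match r with
  | [::] => None
  | p1 :: rest =>
      foldl (fun (acc : option nat) p =>
               if acc is Some q then bpos_rel w p q else None)
            (bpos_abs w p1) rest
  end.

Definition in_Rstar (n : nat) (r : ranker) : bool := (1 <= size r) && (size r <= n).

Definition defines_ranker (n : nat) (psi : fo2 Sigma) (r : ranker) : Prop :=
  in_FO2n n psi /\ only_x psi /\
  forall w i, in_pos w i -> (satx w i psi <-> ranker_eval w r = Some i).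

Definition big_disj (psi : ranker -> fo2 Sigma) (s : seq (fo2 Sigma * ranker)) : fo2 Sigma :=
  foldr (fun p acc => FOr (FAnd p.1 (psi p.2)) acc) FFalse s.

Definition mutually_exclusive (s : seq (fo2 Sigma)) : Prop :=
  forall i j, i < j < size s ->
    forall w p, in_pos w p ->
      ~ (satx w p (nth FFalse s i) /\ satx w p (nth FFalse s j)).

End Sem.

(* A unique position formula of depth n holds only at positions that are values
   of rankers of size at most n.  Suppose no such ranker reaches position i of w,
   and duplicate the letter w_i.  In the longer word these rankers take their old
   values shifted past i, and both copies i and i+1 compare to them as i does in w.
   Positions that carry the same letter and compare alike to all rankers of size at
   most k cannot be told apart in the k-round two-pebble Ehrenfeucht-Fraisse game:
   Duplicator answers a move q by the value of a ranker one step longer, namely the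
   first or last occurrence of the letter of q between the ranker values nearest to
   q.  Hence phi holds at both i and i+1, contradicting uniqueness.  Listing R_n^*
   as r_1, r_2, ..., phi is then the disjunction of the formulas
   phi /\ psi_{r_j} /\ ~psi_{r_1} /\ ... /\ ~psi_{r_(j-1)}. *)

From Corelib Require Import Setoid.
From mathcomp Require Import all_boot zify.
Set Implicit Arguments. Unset Strict Implicit. Unset Printing Implicit Defensive.

(** * Boundary positions and rankers *)

Variant first_in_spec (P : pred nat) s len : option nat -> Prop :=
 | FirstIn j of s <= j < s + len & P j & (forall m, s <= m < j -> ~~ P m) :
     first_in_spec P s len (Some j)
 | FirstInNone of (forall m, s <= m < s + len -> ~~ P m) : first_in_spec P s len None.

Lemma first_in_iotaP (P : pred nat) s len :
  first_in_spec P s len (ohead [seq m <- iota s len | P m]).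
Proof.
elim: len s => [|len IH] s /=; first by constructor => m; lia.
case Ps: (P s) => /=; first by constructor => // [|m]; lia.
case: (IH s.+1) => [j j_in Pj before_j|none]; constructor => //.
- lia.
- by move=> m m_in; have [->|ne] := eqVneq m s; [rewrite Ps | apply: before_j; lia].
- by move=> m m_in; have [->|ne] := eqVneq m s; [rewrite Ps | apply: none; lia].
Qed.

Variant last_in_spec (P : pred nat) s len : option nat -> Prop :=
 | LastIn j of s <= j < s + len & P j & (forall m, j < m < s + len -> ~~ P m) :
     last_in_spec P s len (Some j)
 | LastInNone of (forall m, s <= m < s + len -> ~~ P m) : last_in_spec P s len None.

Lemma last_in_iotaP (P : pred nat) s len :
  last_in_spec P s len (ohead (rev [seq m <- iota s len | P m])).
Proof.
elim: len => [|len IH]; first by constructor => m; lia.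
rewrite -addn1 iotaD /= filter_cat /= rev_cat /=.
case Ps: (P (s + len)) => /=; first by constructor => // [|m]; lia.
case: IH => [j j_in Pj after_j|none]; constructor => //.
- lia.
- by move=> m m_in; have [->|ne] := eqVneq m (s + len); [rewrite Ps | apply: after_j; lia].
- by move=> m m_in; have [->|ne] := eqVneq m (s + len); [rewrite Ps | apply: none; lia].
Qed.

Section Letters.
Variable Sigma : eqType.
Implicit Types (w : seq Sigma) (b : Sigma).

Lemma letter_at_in_pos w m b : letter_at w m = Some b -> 0 < m -> in_pos w m.
Proof.
rewrite /letter_at /in_pos => wm m_gt0.
have : (onth w m.-1 : bool) by rewrite wm.
rewrite onthTE; lia.
Qed.

Lemma letter_at_oversize w m : size w < m -> letter_at w m = None.
Proof. by move=> ?; rewrite /letter_at onth_default //; lia. Qed.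

Lemma in_pos_letter w q : in_pos w q -> exists b, letter_at w q = Some b.
Proof.
rewrite /in_pos /letter_at => /andP [q_gt0 q_le].
have : (onth w q.-1 : bool) by rewrite onthTE; lia.
by case: onth => // b _; exists b.
Qed.

Variant next_letter_spec w b q : option nat -> Prop :=
 | NextLetter j of q < j & letter_at w j = Some b &
     (forall m, q < m < j -> letter_at w m <> Some b) : next_letter_spec w b q (Some j)
 | NoNextLetter of (forall m, q < m -> letter_at w m <> Some b) :
     next_letter_spec w b q None.

Lemma next_letterP w b q : next_letter_spec w b q (bpos_rel w (true, b) q).
Proof.
rewrite /bpos_rel /= /positions_with.
case: first_in_iotaP => [j j_in /eqP wj before_j|none]; constructor => //.
- lia.
- by move=> m m_in; apply/eqP/before_j; lia.
- move=> m m_gt; have [m_le|m_big] := leqP m (size w); first by apply/eqP/none; lia.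
  by rewrite letter_at_oversize.
Qed.

Variant prev_letter_spec w b q : option nat -> Prop :=
 | PrevLetter j of 0 < j < q & letter_at w j = Some b &
     (forall m, j < m < q -> letter_at w m <> Some b) : prev_letter_spec w b q (Some j)
 | NoPrevLetter of (forall m, 0 < m < q -> letter_at w m <> Some b) :
     prev_letter_spec w b q None.

Lemma prev_letterP w b q : prev_letter_spec w b q (bpos_rel w (false, b) q).
Proof.
rewrite /bpos_rel /= /positions_with.
case: last_in_iotaP => [j j_in /eqP wj after_j|none]; constructor => //.
- lia.
- by move=> m m_in; apply/eqP/after_j; lia.
- by move=> m m_in; apply/eqP/none; lia.
Qed.

Lemma next_letter_eq w b q j :
  bpos_rel w (true, b) q = Some j <->
  [/\ q < j, letter_at w j = Some b & forall m, q < m < j -> letter_at w m <> Some b].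
Proof.
split; first by case: next_letterP => // j' ? ? ? [<-].
case=> q_j wj before_j; case: next_letterP => [j' q_j' wj' before_j'|none].
- by case: (ltngtP j j') => [lt|lt|->] //; [case: (before_j' j) | case: (before_j j')] => //; lia.
- by case: (none j).
Qed.

Lemma prev_letter_eq w b q j :
  bpos_rel w (false, b) q = Some j <->
  [/\ 0 < j < q, letter_at w j = Some b & forall m, j < m < q -> letter_at w m <> Some b].
Proof.
split; first by case: prev_letterP => // j' ? ? ? [<-].
case=> j_q wj after_j; case: prev_letterP => [j' j_q' wj' after_j'|none].
- by case: (ltngtP j j') => [lt|lt|->] //; [case: (after_j j') | case: (after_j' j)] => //; lia.
- by case: (none j).
Qed.

Lemma next_letter_le w b l q : l < q -> letter_at w q = Some b ->
  exists2 j, bpos_rel w (true, b) l = Some j & l < j <= q.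
Proof.
move=> l_q wq; case: next_letterP => [j l_j wj before_j|none]; last by case: (none q).
by exists j => //; rewrite l_j /=; case: leqP => // q_j; case: (before_j q) => //; lia.
Qed.

Lemma prev_letter_ge w b h q : 0 < q < h -> letter_at w q = Some b ->
  exists2 j, bpos_rel w (false, b) h = Some j & q <= j < h.
Proof.
move=> q_h wq; case: prev_letterP => [j j_h wj after_j|none]; last by case: (none q).
exists j => //; case: (leqP q j) => [q_j|j_q]; first lia.
by case: (after_j q) => //; lia.
Qed.

Lemma bpos_rel_letter w p q j : bpos_rel w p q = Some j -> letter_at w j = Some p.2 /\ 0 < j.
Proof.
case: p => [[] b] /=.
  by case: next_letterP => // j' q_j wj _ [<-]; split => //; lia.
by case: prev_letterP => // j' j_q wj _ [<-]; split => //; lia.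
Qed.

End Letters.

Section Rankers.
Variable Sigma : eqType.
Implicit Types (w : seq Sigma) (r : ranker Sigma).

(* The empty ranker is anchored at the sentinel 0 before a |> step and at
   |w|+1 before a <| step, so that absolute steps become relative ones. *)
Definition anchor w (d : bool) r : option nat :=
  if r is [::] then Some (if d then 0 else (size w).+1) else ranker_eval w r.

Lemma anchor_eval w d r : 0 < size r -> anchor w d r = ranker_eval w r.
Proof. by case: r. Qed.

Lemma anchor_rcons w d r p : anchor w d (rcons r p) = ranker_eval w (rcons r p).
Proof. by case: r. Qed.

Lemma ranker_eval_rcons w r p :
  ranker_eval w (rcons r p) = obind (bpos_rel w p) (anchor w p.1 r).
Proof.
case: r => [|p1 r] /=; last by rewrite foldl_rcons; case: foldl.
by case: p => [[] a]; rewrite /bpos_abs /bpos_rel //= subn0.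
Qed.

Lemma in_Rstar_le k k' r : k' <= k -> in_Rstar k' r -> in_Rstar k r.
Proof. by rewrite /in_Rstar; lia. Qed.

Lemma in_Rstar_rcons k r p : size r <= k -> in_Rstar k.+1 (rcons r p).
Proof. by rewrite /in_Rstar size_rcons. Qed.

Lemma ranker_eval_letter w r j p0 : ranker_eval w r = Some j ->
  letter_at w j = Some (last p0 r).2 /\ in_pos w j.
Proof.
case/lastP: r => [|r p] //; rewrite ranker_eval_rcons last_rcons.
case: anchor => //= q /bpos_rel_letter [wj j_gt0].
by split => //; apply: letter_at_in_pos wj j_gt0.
Qed.

End Rankers.

Section RankerEnumeration.
Variable Sigma : finType.

Fixpoint rankers_upto (L : nat) : seq (ranker Sigma) :=
  if L is L'.+1 then [::] :: [seq p :: r | p <- enum {: bpos Sigma}, r <- rankers_upto L']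
  else [:: [::]].

Lemma mem_rankers_upto L r : (r \in rankers_upto L) = (size r <= L).
Proof.
elim: L r => [|L IH] [|p r] //=; rewrite inE //= ltnS -IH; apply/allpairsP/idP.
  by case=> [[x y] [/= _ y_in [_ ->]]].
by move=> r_in; exists (p, r); rewrite mem_enum.
Qed.

Definition ranker_hit (w : seq Sigma) L j :=
  has (fun r => in_Rstar L r && (ranker_eval w r == Some j)) (rankers_upto L).

Lemma ranker_hitP w L j :
  reflect (exists2 r, in_Rstar L r & ranker_eval w r = Some j) (ranker_hit w L j).
Proof.
apply: (iffP hasP) => [[r _ /andP [r_in /eqP r_j]]|[r r_in r_j]]; first by exists r.
by exists r; rewrite ?mem_rankers_upto ?r_in ?r_j ?eqxx //; case/andP: r_in.
Qed.

End RankerEnumeration.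

(** * The formulas psi_r *)

Definition other_var (v : var) : var := if v is VX then VY else VX.

Lemma var_eqb_refl v : var_eqb v v. Proof. by case: v. Qed.

Lemma upd_same (nu : var -> nat) v i : upd nu v i v = i.
Proof. by case: v. Qed.

Lemma upd_other_var (nu : var -> nat) v i : upd nu (other_var v) i v = nu v.
Proof. by case: v. Qed.

Definition opt_lt (o : option nat) (v : nat) : bool := if o is Some c then c < v else false.
Definition opt_gt (o : option nat) (v : nat) : bool := if o is Some c then v < c else false.

Section NextPrev.
Variable Sigma : eqType.
Variables (w : seq Sigma) (b : Sigma) (c v : nat).

Lemma next_letter_before :
  (exists m, [/\ in_pos w m, letter_at w m = Some b, m < v & c < m]) <->
  opt_lt (bpos_rel w (true, b) c) v.
Proof.
split=> [[m [_ wm m_v c_m]]|]; case: next_letterP => [j c_j wj before_j|none] //=.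
- by have [//|m_j] := ltnP j v; case: (before_j m) => //; lia.
- by case: (none m).
- by move=> j_v; exists j; split=> //; try apply: letter_at_in_pos wj _; lia.
Qed.

Lemma next_letter_after :
  (exists m, [/\ in_pos w m, letter_at w m = Some b, v < m & c < m]) /\
  ~ (exists m, [/\ in_pos w m, letter_at w m = Some b, m <= v & c < m]) <->
  opt_gt (bpos_rel w (true, b) c) v.
Proof.
split=> [[[m [_ wm v_m c_m]] none_upto]|]; case: next_letterP => [j c_j wj before_j|none] //=.
- have [//|j_v] := ltnP v j; exfalso; apply: none_upto; exists j; split=> //.
  by apply: letter_at_in_pos wj _; lia.
- by case: (none m).
- move=> v_j; split; first by exists j; split=> //; try apply: letter_at_in_pos wj _; lia.
  by case=> m [_ wm m_v c_m]; apply: (before_j m) => //; lia.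
Qed.

Lemma next_letter_at : in_pos w v ->
  [/\ letter_at w v = Some b, c < v &
      ~ exists m, [/\ in_pos w m, letter_at w m = Some b, m < v & c < m]] <->
  bpos_rel w (true, b) c = Some v.
Proof.
move=> v_pos; rewrite next_letter_eq; split=> -[wv c_v before_v]; split=> //.
- by move=> m m_in wm; apply: before_v; exists m; split=> //; try apply: letter_at_in_pos wm _; lia.
- by case=> m [_ wm m_v c_m]; apply: (before_v m) => //; lia.
Qed.

Lemma prev_letter_after :
  (exists m, [/\ in_pos w m, letter_at w m = Some b, v < m & m < c]) <->
  opt_gt (bpos_rel w (false, b) c) v.
Proof.
split=> [[m [/andP [m_gt0 _] wm v_m m_c]]|]; case: prev_letterP => [j j_c wj after_j|none] //=.
- by have [//|j_v] := ltnP v j; case: (after_j m) => //; lia.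
- by case: (none m) => //; lia.
- by move=> v_j; exists j; split=> //; try apply: letter_at_in_pos wj _; lia.
Qed.

Lemma prev_letter_before :
  (exists m, [/\ in_pos w m, letter_at w m = Some b, m < v & m < c]) /\
  ~ (exists m, [/\ in_pos w m, letter_at w m = Some b, v <= m & m < c]) <->
  opt_lt (bpos_rel w (false, b) c) v.
Proof.
split=> [[[m [/andP [m_gt0 _] wm m_v m_c]] none_from]|];
  case: prev_letterP => [j j_c wj after_j|none] //=.
- have [//|v_j] := ltnP j v; exfalso; apply: none_from; exists j; split=> //; last lia.
  by apply: letter_at_in_pos wj _; lia.
- by case: (none m) => //; lia.
- move=> j_v; split; first by exists j; split=> //; try apply: letter_at_in_pos wj _; lia.
  by case=> m [_ wm v_m m_c]; apply: (after_j m) => //; lia.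
Qed.

Lemma prev_letter_at : in_pos w v ->
  [/\ letter_at w v = Some b, v < c &
      ~ exists m, [/\ in_pos w m, letter_at w m = Some b, v < m & m < c]] <->
  bpos_rel w (false, b) c = Some v.
Proof.
move=> /andP [v_gt0 v_le]; rewrite prev_letter_eq; split=> -[wv v_c after_v]; split=> //.
- by rewrite v_gt0.
- by move=> m m_in wm; apply: after_v; exists m; split=> //; try apply: letter_at_in_pos wm _; lia.
- lia.
- by case=> m [_ wm v_m m_c]; apply: (after_v m) => //; lia.
Qed.

End NextPrev.

Section RankerFormulas.
Variable Sigma : eqType.
Implicit Types (w : seq Sigma) (rr : seq (bpos Sigma)) (nu : var -> nat).

Definition exists_letter (b : Sigma) (v : var) (rel f : fo2 Sigma) : fo2 Sigma :=
  FEx (other_var v) (FAnd rel (FAnd (FLetter b (other_var v)) f)).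

Definition fo_lt (u v : var) : fo2 Sigma := FLt Sigma u v.
Definition fo_le (u v : var) : fo2 Sigma := FOr (fo_lt u v) (FEq Sigma u v).

(* [ranker_bounds (rev r) v] says that [v] lies strictly before the anchor that [r]
   offers to a <| step, resp. strictly after the one it offers to a |> step.
   Expressing these at depth [|r|] directly, rather than by quantifying over
   [psi_r], is what keeps [psi_r] itself at depth [|r|]. *)
Fixpoint ranker_bounds rr (v : var) : fo2 Sigma * fo2 Sigma :=
  let u := other_var v in
  match rr with
  | [::] => (FTrue, FTrue)
  | (true, b) :: rr' =>
      let after := (ranker_bounds rr' u).2 in
      (FAnd (exists_letter b v (fo_lt v u) after) (FNot (exists_letter b v (fo_le u v) after)),
       exists_letter b v (fo_lt u v) after)
  | (false, b) :: rr' =>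
      let before := (ranker_bounds rr' u).1 in
      (exists_letter b v (fo_lt v u) before,
       FAnd (exists_letter b v (fo_lt u v) before) (FNot (exists_letter b v (fo_le v u) before)))
  end.

Definition ranker_at rr (v : var) : fo2 Sigma :=
  let u := other_var v in
  match rr with
  | [::] => FFalse
  | (true, b) :: rr' =>
      FAnd (FLetter b v) (FAnd (ranker_bounds rr' v).2
        (FNot (exists_letter b v (fo_lt u v) (ranker_bounds rr' u).2)))
  | (false, b) :: rr' =>
      FAnd (FLetter b v) (FAnd (ranker_bounds rr' v).1
        (FNot (exists_letter b v (fo_lt v u) (ranker_bounds rr' u).1)))
  end.

Definition ranker_fo (r : ranker Sigma) : fo2 Sigma := ranker_at (rev r) VX.

Lemma sat_exists_letter w nu b v rel f (R A : nat -> Prop) :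
  (forall m, sat w (upd nu (other_var v) m) rel <-> R m) ->
  (forall m, in_pos w m -> sat w (upd nu (other_var v) m) f <-> A m) ->
  sat w nu (exists_letter b v rel f) <->
  exists m, [/\ in_pos w m, letter_at w m = Some b, R m & A m].
Proof.
move=> relP fP; rewrite /exists_letter; split=> /= -[m].
  by rewrite upd_same => -[m_pos [/relP Rm [[_ wm] /(fP m m_pos) Am]]]; exists m.
by case=> m_pos wm Rm Am; exists m; rewrite upd_same relP fP.
Qed.

Lemma qdepth_exists_letter b v (rel f : fo2 Sigma) :
  qdepth rel = 0 -> qdepth (exists_letter b v rel f) = (qdepth f).+1.
Proof. by move=> rel0; rewrite /= rel0 !max0n. Qed.

Lemma free_exists_letter b v (rel f : fo2 Sigma) :
  free (other_var v) (exists_letter b v rel f) = false.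
Proof. by case: v. Qed.

#[local] Opaque exists_letter.

Lemma sat_lt_other w nu v m : sat w (upd nu (other_var v) m) (fo_lt (other_var v) v) <-> m < nu v.
Proof. by rewrite /fo_lt /= upd_same upd_other_var. Qed.

Lemma sat_gt_other w nu v m : sat w (upd nu (other_var v) m) (fo_lt v (other_var v)) <-> nu v < m.
Proof. by rewrite /fo_lt /= upd_same upd_other_var. Qed.

Lemma sat_le_other w nu v m : sat w (upd nu (other_var v) m) (fo_le (other_var v) v) <-> m <= nu v.
Proof. by rewrite /fo_le /fo_lt /= upd_same upd_other_var; lia. Qed.

Lemma sat_ge_other w nu v m : sat w (upd nu (other_var v) m) (fo_le v (other_var v)) <-> nu v <= m.
Proof. by rewrite /fo_le /fo_lt /= upd_same upd_other_var; lia. Qed.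

Section Steps.
Variables (w : seq Sigma) (nu : var -> nat) (v : var) (b : Sigma) (o : option nat).
Local Notation u := (other_var v).

Lemma next_bounds_sat f :
  (forall m, in_pos w m -> sat w (upd nu u m) f <-> opt_lt o m) ->
  (sat w nu (FAnd (exists_letter b v (fo_lt v u) f) (FNot (exists_letter b v (fo_le u v) f)))
     <-> opt_gt (obind (bpos_rel w (true, b)) o) (nu v)) /\
  (sat w nu (exists_letter b v (fo_lt u v) f) <-> opt_lt (obind (bpos_rel w (true, b)) o) (nu v)).
Proof.
move=> fP; rewrite /= (sat_exists_letter b (sat_gt_other w nu v) fP).
rewrite (sat_exists_letter b (sat_le_other w nu v) fP).
rewrite (sat_exists_letter b (sat_lt_other w nu v) fP).
case: o fP => [c|] fP /=; first by split; [apply: next_letter_after | apply: next_letter_before].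
by split; split=> //; [case=> -[m []] | case=> m []].
Qed.

Lemma prev_bounds_sat f :
  (forall m, in_pos w m -> sat w (upd nu u m) f <-> opt_gt o m) ->
  (sat w nu (exists_letter b v (fo_lt v u) f)
     <-> opt_gt (obind (bpos_rel w (false, b)) o) (nu v)) /\
  (sat w nu (FAnd (exists_letter b v (fo_lt u v) f) (FNot (exists_letter b v (fo_le v u) f)))
     <-> opt_lt (obind (bpos_rel w (false, b)) o) (nu v)).
Proof.
move=> fP; rewrite /= (sat_exists_letter b (sat_gt_other w nu v) fP).
rewrite (sat_exists_letter b (sat_ge_other w nu v) fP).
rewrite (sat_exists_letter b (sat_lt_other w nu v) fP).
case: o fP => [c|] fP /=; first by split; [apply: prev_letter_after | apply: prev_letter_before].
by split; split=> //; [case=> m [] | case=> -[m []]].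
Qed.

Lemma next_at_sat f g : in_pos w (nu v) ->
  (sat w nu g <-> opt_lt o (nu v)) ->
  (forall m, in_pos w m -> sat w (upd nu u m) f <-> opt_lt o m) ->
  sat w nu (FAnd (FLetter b v) (FAnd g (FNot (exists_letter b v (fo_lt u v) f)))) <->
  obind (bpos_rel w (true, b)) o = Some (nu v).
Proof.
move=> v_pos gP fP; rewrite /= gP (sat_exists_letter b (sat_lt_other w nu v) fP) v_pos.
case: o {gP} fP => [c|] fP /=; last by split=> // -[_ []].
by rewrite -next_letter_at //; split=> [[[_ ?] [? ?]]|[? ? ?]].
Qed.

Lemma prev_at_sat f g : in_pos w (nu v) ->
  (sat w nu g <-> opt_gt o (nu v)) ->
  (forall m, in_pos w m -> sat w (upd nu u m) f <-> opt_gt o m) ->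
  sat w nu (FAnd (FLetter b v) (FAnd g (FNot (exists_letter b v (fo_lt v u) f)))) <->
  obind (bpos_rel w (false, b)) o = Some (nu v).
Proof.
move=> v_pos gP fP; rewrite /= gP (sat_exists_letter b (sat_gt_other w nu v) fP) v_pos.
case: o {gP} fP => [c|] fP /=; last by split=> // -[_ []].
by rewrite -prev_letter_at //; split=> [[[_ ?] [? ?]]|[? ? ?]].
Qed.

End Steps.

Lemma ranker_bounds_sat w rr v nu : in_pos w (nu v) ->
  (sat w nu (ranker_bounds rr v).1 <-> opt_gt (anchor w false (rev rr)) (nu v)) /\
  (sat w nu (ranker_bounds rr v).2 <-> opt_lt (anchor w true (rev rr)) (nu v)).
Proof.
elim: rr v nu => [|[[] b] rr IH] v nu /andP [v_gt0 v_le] /=.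
  by rewrite ltnS v_le v_gt0.
all: rewrite rev_cons !anchor_rcons ranker_eval_rcons /=.
all: move: (IH (other_var v)) => IHu.
- apply: next_bounds_sat => m m_pos.
  by have := IHu (upd nu (other_var v) m); rewrite upd_same => /(_ m_pos) [].
- apply: prev_bounds_sat => m m_pos.
  by have := IHu (upd nu (other_var v) m); rewrite upd_same => /(_ m_pos) [].
Qed.

Lemma ranker_bounds_sat_other w rr v nu m : in_pos w m ->
  (sat w (upd nu (other_var v) m) (ranker_bounds rr (other_var v)).1 <->
     opt_gt (anchor w false (rev rr)) m) /\
  (sat w (upd nu (other_var v) m) (ranker_bounds rr (other_var v)).2 <->
     opt_lt (anchor w true (rev rr)) m).
Proof.
move=> m_pos; have := @ranker_bounds_sat w rr (other_var v) (upd nu (other_var v) m).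
by rewrite upd_same; apply.
Qed.

Lemma ranker_at_sat w rr v nu : in_pos w (nu v) ->
  sat w nu (ranker_at rr v) <-> ranker_eval w (rev rr) = Some (nu v).
Proof.
case: rr => [|[[] b] rr] v_pos; first by [].
all: rewrite rev_cons ranker_eval_rcons; have [before after] := ranker_bounds_sat rr v_pos.
- by apply: next_at_sat => // m /(ranker_bounds_sat_other rr v nu) [].
- by apply: prev_at_sat => // m /(ranker_bounds_sat_other rr v nu) [].
Qed.

Lemma ranker_bounds_depth rr v :
  qdepth (ranker_bounds rr v).1 <= size rr /\ qdepth (ranker_bounds rr v).2 <= size rr.
Proof.
elim: rr v => [|[[] b] rr IH] v //=; have [IH1 IH2] := IH (other_var v).
all: rewrite !qdepth_exists_letter //; lia.
Qed.

Lemma ranker_bounds_free rr v :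
  ~~ free (other_var v) (ranker_bounds rr v).1 && ~~ free (other_var v) (ranker_bounds rr v).2.
Proof. by case: rr => [|[[] b] rr] //=; rewrite !free_exists_letter. Qed.

Lemma ranker_at_depth rr v : qdepth (ranker_at rr v) <= size rr.
Proof.
case: rr => [|[[] b] rr] //=; have [D1 D2] := ranker_bounds_depth rr v.
all: have [D1' D2'] := ranker_bounds_depth rr (other_var v).
all: rewrite qdepth_exists_letter //; lia.
Qed.

Lemma ranker_at_free rr v : ~~ free (other_var v) (ranker_at rr v).
Proof.
case: rr => [|[[] b] rr] //=; have /andP [/negbTE F1 /negbTE F2] := ranker_bounds_free rr v.
all: by rewrite ?F1 ?F2 free_exists_letter; case: v {F1 F2}.
Qed.

Lemma ranker_fo_sat w i r : in_pos w i -> satx w i (ranker_fo r) <-> ranker_eval w r = Some i.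
Proof. by move=> i_pos; rewrite /satx ranker_at_sat // revK. Qed.

Lemma ranker_fo_defines n r : in_Rstar n r -> defines_ranker n (ranker_fo r) r.
Proof.
case/andP=> _ r_n; split; [|split; [exact: ranker_at_free | move=> w i; exact: ranker_fo_sat]].
by rewrite /in_FO2n (leq_trans (ranker_at_depth _ _)) // size_rev.
Qed.

End RankerFormulas.

(** * The two-pebble game *)

Lemma sat_free_ext (Sigma : eqType) (w : seq Sigma) f nu nu' :
  (forall v, free v f -> nu v = nu' v) -> sat w nu f <-> sat w nu' f.
Proof.
elim: f nu nu' => [||a v|u v|u v|g IH|g IHg h IHh|g IHg h IHh|v g IH] nu nu' /= agree.
- by [].
- by [].
- by rewrite agree // var_eqb_refl.
- by rewrite !agree // var_eqb_refl ?orbT.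
- by rewrite !agree // var_eqb_refl ?orbT.
- by rewrite (IH nu nu').
- by rewrite (IHg nu nu') ?(IHh nu nu') // => u fu; apply: agree; rewrite fu ?orbT.
- by rewrite (IHg nu nu') ?(IHh nu nu') // => u fu; apply: agree; rewrite fu ?orbT.
- suff upd_agree i : forall u, free u g -> upd nu v i u = upd nu' v i u.
    by split=> -[i [i_pos gi]]; exists i; split; rewrite // (IH _ _ (upd_agree i)) in gi *.
  move=> u fu; rewrite /upd; case: ifP => // vu; apply: agree.
  by rewrite fu andbT; case: u v vu {fu} => -[].
Qed.

Lemma satx_const (Sigma : eqType) (w : seq Sigma) i f :
  only_x f -> satx w i f <-> sat w (fun=> i) f.
Proof. by move=> /negbTE fy; apply: sat_free_ext => -[]; rewrite ?fy. Qed.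

Definition same_order (p q p' q' : nat) : bool :=
  ((p < q) == (p' < q')) && ((q < p) == (q' < p')).

Definition locate (o : option nat) (p : nat) : option (bool * bool) :=
  omap (fun j => (j < p, p < j)) o.

Lemma same_order_refl p q : same_order p q p q.
Proof. by rewrite /same_order !eqxx. Qed.

Lemma same_order_sym p q p' q' : same_order p q p' q' = same_order q p q' p'.
Proof. by rewrite /same_order andbC. Qed.

Lemma same_order_swap p q p' q' : same_order p q p' q' = same_order p' q' p q.
Proof. by rewrite /same_order eq_sym [(q < p) == _]eq_sym. Qed.

Lemma same_order_trans p q p1 q1 p2 q2 :
  same_order p q p1 q1 -> same_order p1 q1 p2 q2 -> same_order p q p2 q2.
Proof. by rewrite /same_order => /andP [/eqP -> /eqP ->]. Qed.

Lemma same_order_lt p q p' q' : same_order p q p' q' -> (p < q) = (p' < q').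
Proof. by case/andP => /eqP. Qed.

Lemma same_order_eq p q p' q' : same_order p q p' q' -> (p = q) <-> (p' = q').
Proof. by case/andP => /eqP lt /eqP gt; split => eq; subst; move: lt gt; rewrite ltnn; lia. Qed.

Lemma locate_same_order j p j' p' :
  locate (Some j) p = locate (Some j') p' -> same_order p j p' j'.
Proof. by case=> lt gt; rewrite /same_order lt gt !eqxx. Qed.

Section Game.
Variable Sigma : eqType.
Variables w w' : seq Sigma.

Fixpoint duplicator_wins (k p p' : nat) {struct k} : Prop :=
  [/\ in_pos w p, in_pos w' p' & letter_at w p = letter_at w' p'] /\
  if k is k'.+1 then
    (forall q, in_pos w q -> exists q',
       [/\ in_pos w' q', same_order p q p' q' & duplicator_wins k' q q']) /\
    (forall q', in_pos w' q' -> exists q,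
       [/\ in_pos w q, same_order p q p' q' & duplicator_wins k' q q'])
  else True.

Lemma duplicator_wins_letter k p p' : duplicator_wins k p p' ->
  [/\ in_pos w p, in_pos w' p' & letter_at w p = letter_at w' p'].
Proof. by case: k => [|k] []. Qed.

Lemma duplicator_winsS k p p' : duplicator_wins k.+1 p p' -> duplicator_wins k p p'.
Proof.
elim: k p p' => [|k IH] p p' /= [base [forth back]] //; split=> //; split.
- by move=> q /forth [q' [? ? /IH]]; exists q'.
- by move=> q' /back [q [? ? /IH]]; exists q.
Qed.

Definition game_inv k (nu nu' : var -> nat) : Prop :=
  (forall v, duplicator_wins k (nu v) (nu' v)) /\
  same_order (nu VX) (nu VY) (nu' VX) (nu' VY).

Lemma game_inv_upd k nu nu' v i i' :
  duplicator_wins k.+1 (nu (other_var v)) (nu' (other_var v)) ->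
  same_order (nu (other_var v)) i (nu' (other_var v)) i' -> duplicator_wins k i i' ->
  game_inv k (upd nu v i) (upd nu' v i').
Proof.
move=> win_other ord win_i; split; last by case: v win_other ord => /= _; rewrite // same_order_sym.
by move=> u; move: win_other; case: v {ord}; case: u => //= /duplicator_winsS.
Qed.

Lemma game_inv_sat f k nu nu' :
  qdepth f <= k -> game_inv k nu nu' -> sat w nu f <-> sat w' nu' f.
Proof.
elim: f k nu nu' => [||a v|u v|u v|g IH|g IHg h IHh|g IHg h IHh|v g IH] k nu nu' /=
  depth_f [win ord].
- by [].
- by [].
- by have [? ? ->] := duplicator_wins_letter (win v); split=> -[].
- case: u; case: v; rewrite ?ltnn ?(same_order_lt ord) //.
  by rewrite same_order_sym in ord; rewrite (same_order_lt ord).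
- case: u; case: v; rewrite ?(same_order_eq ord) //.
  by rewrite same_order_sym in ord; rewrite (same_order_eq ord).
- by rewrite (IH k nu nu').
- by rewrite (IHg k nu nu') ?(IHh k nu nu') //; lia.
- by rewrite (IHg k nu nu') ?(IHh k nu nu') //; lia.
- case: k depth_f win => [|k] // depth_g win.
  have [_ [forth back]] := win (other_var v).
  split=> -[i [i_pos gi]].
  + have [i' [i'_pos ord_i win_i]] := forth i i_pos; exists i'; split => //.
    by apply/(IH k (upd nu v i)) => //; apply: game_inv_upd (win _) ord_i win_i.
  + have [j [j_pos ord_j win_j]] := back i i_pos; exists j; split => //.
    by apply/(IH k _ (upd nu' v i)) => //; apply: game_inv_upd (win _) ord_j win_j.
Qed.

End Game.

Lemma duplicator_wins_satx (Sigma : eqType) (w w' : seq Sigma) n f i i' :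
  only_x f -> qdepth f <= n -> duplicator_wins w w' n i i' ->
  satx w i f <-> satx w' i' f.
Proof.
move=> fx depth_f win; rewrite !satx_const //; apply: game_inv_sat depth_f _.
by split; rewrite /same_order ?ltnn.
Qed.

(** * Duplicator's strategy from ranker comparisons *)

Lemma same_order_split p q j1 j2 : j1 <= q <= j2 -> q != p ->
  same_order p q p j1 || same_order p q p j2.
Proof.
move=> /andP [j1_q q_j2] /eqP q_p.
have same j : (p < q) = (p < j) -> (q < p) = (j < p) -> same_order p q p j.
  by rewrite /same_order => -> ->; rewrite !eqxx.
apply/orP; have [p_j1|j1_p] := ltnP p j1; first by left; apply: same; apply/idP/idP; lia.
have [j2_p|p_j2] := ltnP j2 p; first by right; apply: same; apply/idP/idP; lia.
have [p_q|q_p'] := ltnP p q; first by right; apply: same; apply/idP/idP; lia.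
by left; apply: same; apply/idP/idP; lia.
Qed.

Lemma locate_gap v l h x y : (v <= l) || (h <= v) -> l < x < h -> l < y < h ->
  locate (Some v) x = locate (Some v) y.
Proof. by move=> v_out x_in y_in /=; congr (Some (_, _)); apply/idP/idP; lia. Qed.

Section Strategy.
Variable Sigma : finType.
Implicit Types (w : seq Sigma) (r : ranker Sigma).

Definition ranker_equiv w w' k p p' : Prop :=
  [/\ in_pos w p, in_pos w' p', letter_at w p = letter_at w' p' &
      forall r, in_Rstar k r -> locate (ranker_eval w r) p = locate (ranker_eval w' r) p'].

Definition ranker_transfer w w' n : Prop :=
  forall s j, in_Rstar n s -> ranker_eval w s = Some j ->
    exists2 j', ranker_eval w' s = Some j' &
      forall r, in_Rstar n r -> locate (ranker_eval w r) j = locate (ranker_eval w' r) j'.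

Lemma ranker_equiv_sym w w' k p p' : ranker_equiv w w' k p p' -> ranker_equiv w' w k p' p.
Proof. by case=> ? ? ? same; split=> // r /same. Qed.

Lemma ranker_equiv_le w w' k k' p p' :
  k' <= k -> ranker_equiv w w' k p p' -> ranker_equiv w w' k' p p'.
Proof. by move=> k'_k [? ? ? same]; split=> // r /(in_Rstar_le k'_k)/same. Qed.

Lemma lower_bracket w m q : 0 < q -> exists l rl,
  [/\ anchor w true rl = Some l, size rl <= m, l < q &
      forall r v, in_Rstar m r -> ranker_eval w r = Some v -> v < q -> v <= l].
Proof.
move=> q_gt0; pose P j := (j < q) && ((j == 0) || ranker_hit w m j).
have exP : exists j, P j by exists 0; rewrite /P q_gt0.
have ubP j : P j -> j <= q by case/andP => ? _; lia.
case: (ex_maxnP exP ubP) => l /andP [l_q l_val] l_max.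
have l_max' r v : in_Rstar m r -> ranker_eval w r = Some v -> v < q -> v <= l.
  move=> r_in r_v v_q; apply: l_max.
  by rewrite /P v_q; apply/orP; right; apply/ranker_hitP; exists r.
case/orP: l_val => [/eqP l0|/ranker_hitP [rl /andP [rl_gt0 rl_m] rl_l]].
  by exists l, [::]; split=> //; rewrite /= l0.
by exists l, rl; rewrite anchor_eval.
Qed.

Lemma upper_bracket w m q : q <= size w -> exists h rh,
  [/\ anchor w false rh = Some h, size rh <= m, q < h &
      forall r v, in_Rstar m r -> ranker_eval w r = Some v -> q < v -> h <= v].
Proof.
move=> q_le; pose P j := (q < j) && ((j == (size w).+1) || ranker_hit w m j).
have exP : exists j, P j by exists (size w).+1; rewrite /P eqxx ltnS q_le.
case: (ex_minnP exP) => h /andP [q_h h_val] h_min.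
have h_min' r v : in_Rstar m r -> ranker_eval w r = Some v -> q < v -> h <= v.
  move=> r_in r_v q_v; apply: h_min.
  by rewrite /P q_v; apply/orP; right; apply/ranker_hitP; exists r.
case/orP: h_val => [/eqP h_end|/ranker_hitP [rh /andP [rh_gt0 rh_m] rh_h]].
  by exists h, [::]; split=> //; rewrite /= h_end.
by exists h, rh; rewrite anchor_eval.
Qed.

Section Forth.
Variables (w w' : seq Sigma) (n k p p' q : nat).
Hypotheses (transfer : ranker_transfer w w' n) (k_n : k < n)
  (equiv : ranker_equiv w w' k.+1 p p') (q_pos : in_pos w q).

Lemma forth_by_ranker R j :
  in_Rstar k.+1 R -> ranker_eval w R = Some j -> letter_at w j = letter_at w q ->
  same_order p q p j ->
  (forall r, in_Rstar k r -> locate (ranker_eval w r) q = locate (ranker_eval w r) j) ->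
  exists q', [/\ in_pos w' q', same_order p q p' q' & ranker_equiv w w' k q q'].
Proof.
move=> R_in R_j wj ord_j q_like_j; have [_ _ _ same_p] := equiv.
have [j' R_j' same_j] := transfer (in_Rstar_le k_n R_in) R_j.
have [b _] := in_pos_letter q_pos.
have [wj_last _] := ranker_eval_letter (true, b) R_j.
have [wj'_last j'_pos] := ranker_eval_letter (true, b) R_j'.
exists j'; split=> //.
  apply: same_order_trans ord_j (locate_same_order _).
  by rewrite -R_j -R_j' same_p.
split=> //; first by rewrite -wj wj_last wj'_last.
by move=> r r_in; rewrite (q_like_j _ r_in) (same_j _ (in_Rstar_le (ltnW k_n) r_in)).
Qed.

Lemma ranker_equiv_forth :
  exists q', [/\ in_pos w' q', same_order p q p' q' & ranker_equiv w w' k q q'].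
Proof.
have [p_pos p'_pos _ _] := equiv.
have [->|q_p] := eqVneq q p.
  exists p'; split=> //; first by rewrite /same_order !ltnn.
  exact: ranker_equiv_le (leqnSn k) equiv.
case: (boolP (ranker_hit w k q)) => [/ranker_hitP [r r_in r_q]|no_hit].
  apply: (forth_by_ranker (in_Rstar_le (leqnSn k) r_in) r_q) => //.
  exact: same_order_refl.
have [b wq] := in_pos_letter q_pos; have /andP [q_gt0 q_le] := q_pos.
have [l [rl [rl_l rl_k l_q l_max]]] := lower_bracket w k q_gt0.
have [h [rh [rh_h rh_k q_h h_min]]] := upper_bracket k q_le.
have [j1 l_j1 /andP [l_j1' j1_q]] := next_letter_le l_q wq.
have [j2 h_j2 /andP [q_j2 j2_h]] := prev_letter_ge (introT andP (conj q_gt0 q_h)) wq.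
have like_q x r : l < x < h -> in_Rstar k r ->
    locate (ranker_eval w r) q = locate (ranker_eval w r) x.
  move=> x_in r_in; case r_v: (ranker_eval w r) => [v|] //.
  apply: (locate_gap (l := l) (h := h)); rewrite ?l_q ?q_h //.
  case: (ltngtP v q) => [v_q|q_v|v_q]; first by rewrite (l_max r).
  - by rewrite (h_min r) ?orbT.
  - by case/ranker_hitP: no_hit; exists r; rewrite // r_v v_q.
have [ord1|ord2] := orP (same_order_split (introT andP (conj j1_q q_j2)) q_p).
- apply: (forth_by_ranker (R := rcons rl (true, b))) ord1 _.
  + exact: in_Rstar_rcons.
  + by rewrite ranker_eval_rcons /= rl_l.
  + by rewrite wq; case: (bpos_rel_letter l_j1).
  + by move=> r; apply: like_q; lia.
- apply: (forth_by_ranker (R := rcons rh (false, b))) ord2 _.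
  + exact: in_Rstar_rcons.
  + by rewrite ranker_eval_rcons /= rh_h.
  + by rewrite wq; case: (bpos_rel_letter h_j2).
  + by move=> r; apply: like_q; lia.
Qed.

End Forth.

Lemma ranker_equiv_wins w w' n k p p' :
  ranker_transfer w w' n -> ranker_transfer w' w n -> k <= n ->
  ranker_equiv w w' k p p' -> duplicator_wins w w' k p p'.
Proof.
move=> transfer transfer'; elim: k p p' => [|k IH] p p' k_n equiv.
  by case: equiv.
have [p_pos p'_pos wp _] := equiv; split=> //; split.
- move=> q q_pos; have [q' [? ? ?]] := ranker_equiv_forth transfer k_n equiv q_pos.
  by exists q'; split=> //; apply: IH => //; lia.
- move=> q' q'_pos.
  have [q [? ord ?]] := ranker_equiv_forth transfer' k_n (ranker_equiv_sym equiv) q'_pos.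
  exists q; rewrite same_order_swap; split=> //; apply: IH; [lia | exact: ranker_equiv_sym].
Qed.

End Strategy.

(** * Duplicating a position that no ranker reaches *)

Definition shift (i j : nat) : nat := if j <= i then j else j.+1.

Lemma shift_lt i x y : (shift i x < shift i y) = (x < y).
Proof. by rewrite /shift; case: (leqP x i); case: (leqP y i) => *; apply/idP/idP; lia. Qed.

Lemma locate_shift i o j : locate (omap (shift i) o) (shift i j) = locate o j.
Proof. by case: o => //= v; rewrite !shift_lt. Qed.

Lemma locate_shift_dup i v c : v != i -> i <= c <= i.+1 ->
  locate (Some (shift i v)) c = locate (Some v) i.
Proof.
move=> /eqP v_i c_i; rewrite /= /shift.
by case: (leqP v i) => v_le; congr (Some (_, _)); apply/idP/idP; lia.
Qed.

Section Duplication.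
Variable Sigma : eqType.
Variables (w : seq Sigma) (i : nat) (a : Sigma).
Hypotheses (i_pos : in_pos w i) (wi : letter_at w i = Some a).

Definition dup_word : seq Sigma := take i w ++ a :: drop i w.

Local Notation shift := (shift i).

Let i_gt0 : 0 < i. Proof. by case/andP: i_pos. Qed.
Let i_le : i <= size w. Proof. by case/andP: i_pos. Qed.

Lemma size_dup_word : size dup_word = (size w).+1.
Proof. by rewrite size_cat /= size_take size_drop; case: ltnP; lia. Qed.

Lemma letter_at_shift m : 0 < m -> letter_at dup_word (shift m) = letter_at w m.
Proof.
move=> m_gt0; rewrite /letter_at !onthE /dup_word map_cat nth_cat size_map size_takel //.
rewrite /shift; case: (leqP m i) => m_i.
  by rewrite ifT ?map_take ?nth_take //; lia.
rewrite ifF; last lia.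
have -> : m.+1.-1 - i = (m.-1 - i).+1 by lia.
by rewrite /= map_drop nth_drop; congr nth; lia.
Qed.

Lemma letter_at_dup : letter_at dup_word i.+1 = Some a.
Proof. by rewrite /letter_at /dup_word onth_cat size_takel // ltnn subnn. Qed.

Lemma dup_positions m : 0 < m -> m = i.+1 \/ exists2 m0, 0 < m0 & m = shift m0.
Proof.
move=> m_gt0; case: (ltngtP m i.+1) => m_i; [right | right | by left].
- by exists m; rewrite // /shift ifT //; lia.
- by exists m.-1; rewrite /shift ?ifF; lia.
Qed.

Lemma next_letter_shift b q : q != i -> bpos_rel w (true, b) q != Some i ->
  bpos_rel dup_word (true, b) (shift q) = omap shift (bpos_rel w (true, b) q).
Proof.
move=> q_i; case: next_letterP => [j q_j wj before_j|none] j_i /=.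
  apply/next_letter_eq; split; first by rewrite shift_lt.
    by rewrite letter_at_shift //; lia.
  move=> m m_in; have [m_i|[m0 m0_gt0 m_m0]] := dup_positions (m := m) ltac:(lia); subst m.
    rewrite letter_at_dup => -[ab].
    have [q_le j_gt] : q <= i /\ i < j.
      by move: m_in; rewrite /shift; case: (leqP q i); case: (leqP j i); lia.
    by apply: (before_j i); [lia | rewrite wi ab].
  by rewrite letter_at_shift //; apply: before_j; move: m_in; rewrite !shift_lt.
case: next_letterP => // j q_j wj _.
have [j_i'|[m0 m0_gt0 j_m0]] := dup_positions (m := j) ltac:(lia).
  have q_i' : q < i by move: q_j; rewrite j_i' /shift; case: (leqP q i); lia.
  by move: wj; rewrite j_i' letter_at_dup => -[ab]; exfalso; apply: (none i q_i'); rewrite wi ab.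
move: wj; rewrite j_m0 letter_at_shift // => wm0; exfalso; apply: (none m0 _ wm0).
by rewrite -(shift_lt i q) -j_m0.
Qed.

Lemma prev_letter_shift b q : q != i -> bpos_rel w (false, b) q != Some i ->
  bpos_rel dup_word (false, b) (shift q) = omap shift (bpos_rel w (false, b) q).
Proof.
move=> q_i; case: prev_letterP => [j j_q wj after_j|none] j_i /=.
  apply/prev_letter_eq; split.
  - by rewrite shift_lt; move: j_q; rewrite /shift; case: (leqP j i); lia.
  - by rewrite letter_at_shift //; lia.
  move=> m m_in; have [m_i|[m0 m0_gt0 m_m0]] := dup_positions (m := m) ltac:(lia); subst m.
    rewrite letter_at_dup => -[ab].
    have [j_le q_gt] : j <= i /\ i < q.
      by move: m_in; rewrite /shift; case: (leqP q i); case: (leqP j i); lia.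
    have j_ne : j <> i by move=> ji; rewrite ji eqxx in j_i.
    by apply: (after_j i); [lia | rewrite wi ab].
  by rewrite letter_at_shift //; apply: after_j; move: m_in; rewrite !shift_lt.
case: prev_letterP => // j j_q wj _.
have [j_i'|[m0 m0_gt0 j_m0]] := dup_positions (m := j) ltac:(lia).
  have i_q : i < q by move: j_q; rewrite j_i' /shift; case: (leqP q i); lia.
  by move: wj; rewrite j_i' letter_at_dup => -[ab]; exfalso; apply: (none i); [lia | rewrite wi ab].
move: wj; rewrite j_m0 letter_at_shift // => wm0; exfalso; apply: (none m0 _ wm0).
by rewrite m0_gt0 /= -(shift_lt i m0) -j_m0; case/andP: j_q.
Qed.

Lemma bpos_rel_shift p q : q != i -> bpos_rel w p q != Some i ->
  bpos_rel dup_word p (shift q) = omap shift (bpos_rel w p q).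
Proof. by case: p => [[] b]; [apply: next_letter_shift | apply: prev_letter_shift]. Qed.

Section Unreached.
Variable n : nat.
Hypothesis unreached : forall r : ranker Sigma, in_Rstar n r -> ranker_eval w r != Some i.

Lemma anchor_not_dup d r : size r <= n -> anchor w d r != Some i.
Proof.
case: r => [|p r] r_n; last by rewrite anchor_eval //; apply: unreached.
by case: d => /=; apply/eqP => -[]; lia.
Qed.

Lemma anchor_shift d r : size r <= n -> anchor dup_word d r = omap shift (anchor w d r).
Proof.
elim/last_ind: r d => [|r p IH] d.
  by case: d => _ /=; rewrite /shift ?size_dup_word //= ifF //; lia.
rewrite size_rcons => r_n; rewrite !anchor_rcons !ranker_eval_rcons IH; last lia.
have := unreached (in_Rstar_le r_n (in_Rstar_rcons p (leqnn _))); rewrite ranker_eval_rcons.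
have := anchor_not_dup p.1 (ltnW r_n); case: (anchor w p.1 r) => [c|] //= c_i.
exact: bpos_rel_shift.
Qed.

Lemma ranker_eval_shift r : in_Rstar n r -> ranker_eval dup_word r = omap shift (ranker_eval w r).
Proof.
case/andP=> r_gt0 r_n; rewrite -!(anchor_eval _ true) //; exact: anchor_shift.
Qed.

End Unreached.
End Duplication.

Section DuplicationEquiv.
Variable Sigma : finType.
Variables (w : seq Sigma) (i : nat) (a : Sigma) (n : nat).
Hypotheses (i_pos : in_pos w i) (wi : letter_at w i = Some a)
  (unreached : forall r : ranker Sigma, in_Rstar n r -> ranker_eval w r != Some i).

Let eval_dup r : in_Rstar n r -> _ := @ranker_eval_shift _ _ _ _ i_pos wi _ unreached r.

Lemma dup_transfer : ranker_transfer w (dup_word w i a) n.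
Proof.
move=> s j s_in s_j; exists (shift i j); first by rewrite eval_dup // s_j.
by move=> r r_in; rewrite eval_dup // locate_shift.
Qed.

Lemma dup_transfer_back : ranker_transfer (dup_word w i a) w n.
Proof.
move=> s j' s_in; rewrite eval_dup //; case s_j: (ranker_eval w s) => [j|] //= [<-].
by exists j => // r r_in; rewrite eval_dup // locate_shift.
Qed.

Lemma dup_equiv c : i <= c <= i.+1 -> ranker_equiv w (dup_word w i a) n i c.
Proof.
move=> c_i; have /andP [i_gt0 i_le] := i_pos; split=> //.
- by rewrite /in_pos size_dup_word //; lia.
- have [->|->] : c = i \/ c = i.+1 by lia.
    by move: (letter_at_shift a i_pos i_gt0); rewrite /shift leqnn wi.
  by rewrite wi letter_at_dup.
move=> r r_in; rewrite eval_dup //; case r_v: (ranker_eval w r) => [v|] //.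
by rewrite locate_shift_dup //; apply/eqP => v_i; move: (unreached r_in); rewrite r_v v_i eqxx.
Qed.

End DuplicationEquiv.

Lemma unique_position_reached (Sigma : finType) n (phi : fo2 Sigma) w i :
  in_FO2n n phi -> unique_position phi -> in_pos w i -> satx w i phi ->
  exists2 r, in_Rstar n r & ranker_eval w r = Some i.
Proof.
move=> phi_n [phi_x phi_unique] i_pos phi_i.
case: (boolP (ranker_hit w n i)) => [/ranker_hitP //|/ranker_hitP unhit].
have unreached r : in_Rstar n r -> ranker_eval w r != Some i.
  by move=> r_in; apply/eqP => r_i; apply: unhit; exists r.
have [a wi] := in_pos_letter i_pos.
have dup_sat c : i <= c <= i.+1 -> in_pos (dup_word w i a) c /\ satx (dup_word w i a) c phi.
  move=> c_i; have win := ranker_equiv_wins (dup_transfer i_pos wi unreached)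
    (dup_transfer_back i_pos wi unreached) (leqnn n) (dup_equiv i_pos wi unreached c_i).
  have [_ c_pos _] := duplicator_wins_letter win.
  by split=> //; rewrite -(duplicator_wins_satx phi_x phi_n win).
have [i_pos' phi_i'] := dup_sat i ltac:(lia).
have [i1_pos' phi_i1'] := dup_sat i.+1 ltac:(lia).
by have := phi_unique _ _ _ i_pos' i1_pos' phi_i' phi_i1'; lia.
Qed.

(** * The decomposition *)

Section Decomposition.
Variable Sigma : eqType.
Implicit Types (phi f g : fo2 Sigma) (s : seq (fo2 Sigma * ranker Sigma)).

Lemma mutually_exclusive_cons f (fs : seq (fo2 Sigma)) :
  (forall j w p, j < size fs -> in_pos w p -> ~ (satx w p f /\ satx w p (nth FFalse fs j))) ->
  mutually_exclusive fs -> mutually_exclusive (f :: fs).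
Proof.
move=> excl_f excl_fs [|i] [|j] //= ij w p p_pos; first exact: excl_f.
exact: excl_fs.
Qed.

Lemma mutually_exclusive_and g (fs : seq (fo2 Sigma)) :
  mutually_exclusive fs -> mutually_exclusive (map (FAnd g) fs).
Proof.
move=> excl i j ij w p p_pos; rewrite size_map in ij; case/andP: (ij) => i_j j_s.
rewrite !(nth_map FFalse) ?(ltn_trans i_j j_s) //.
by case=> [[_ fi] [_ fj]]; apply: (excl i j ij w p).
Qed.

Lemma sat_big_disj_and (psi : ranker Sigma -> fo2 Sigma) w nu g s :
  sat w nu (big_disj psi [seq (FAnd g p.1, p.2) | p <- s]) <->
  sat w nu g /\ sat w nu (big_disj psi s).
Proof. by elim: s => [|p s IH] /=; [split=> -[] | rewrite IH; tauto]. Qed.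

Fixpoint decomposition phi (rs : seq (ranker Sigma)) : seq (fo2 Sigma * ranker Sigma) :=
  if rs is r :: rs' then
    (FAnd phi (ranker_fo r), r) ::
    [seq (FAnd (FNot (ranker_fo r)) p.1, p.2) | p <- decomposition phi rs']
  else [::].

Lemma map_snd_decomposition phi rs : map snd (decomposition phi rs) = rs.
Proof. by elim: rs => //= r rs IH; rewrite -map_comp; congr (_ :: _). Qed.

Lemma decomposition_mutually_exclusive phi rs :
  mutually_exclusive (map fst (decomposition phi rs)).
Proof.
elim: rs => [|r rs IH] /=; first by move=> i j /andP [].
rewrite -map_comp (map_comp (FAnd _) fst); apply: mutually_exclusive_cons.
  move=> j w p; rewrite size_map => j_s _; rewrite (nth_map FFalse) //.
  by case=> -[_ ?] [].
exact: mutually_exclusive_and.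
Qed.

Lemma in_FO2n_only_x_FAnd n f g :
  in_FO2n n f && only_x f -> in_FO2n n g && only_x g -> in_FO2n n (FAnd f g) && only_x (FAnd f g).
Proof. by rewrite /in_FO2n /only_x /= geq_max negb_or => /andP [-> ->] /andP [-> ->]. Qed.

Lemma decomposition_formulas n phi rs :
  in_FO2n n phi && only_x phi -> all (in_Rstar n) rs ->
  all (fun p => in_FO2n n p.1 && only_x p.1) (decomposition phi rs).
Proof.
move=> phi_ok; elim: rs => //= r rs IH /andP [r_n rs_n].
have [r_depth [r_x _]] := ranker_fo_defines r_n.
have r_ok : in_FO2n n (ranker_fo r) && only_x (ranker_fo r) by rewrite r_depth.
rewrite in_FO2n_only_x_FAnd //= all_map; apply: sub_all (IH rs_n) => p p_ok.
exact: in_FO2n_only_x_FAnd.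
Qed.

Lemma sat_decomposition (psi : ranker Sigma -> fo2 Sigma) phi rs w i :
  (forall r, r \in rs -> satx w i (psi r) <-> ranker_eval w r = Some i) -> in_pos w i ->
  satx w i (big_disj psi (decomposition phi rs)) <->
  satx w i phi /\ has (fun r => ranker_eval w r == Some i) rs.
Proof.
move=> psiP i_pos; elim: rs psiP => [|r rs IH] psiP; first by split=> -[].
have {}IH := IH (fun r' r'_in => psiP r' ltac:(by rewrite inE r'_in orbT)).
have r_fo := ranker_fo_sat r i_pos; have r_psi := psiP r (mem_head _ _).
rewrite /satx /= in IH r_fo r_psi *.
rewrite sat_big_disj_and IH /= r_fo r_psi.
by case: eqP => r_i /=; intuition.
Qed.

End Decomposition.

Unset Implicit Arguments.

Theorem theorem3p12 (Sigma : finType) (n : nat) (phi : fo2 Sigma) :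
  0 < n ->
  in_FO2n n phi ->
  unique_position phi ->
  (forall r : ranker Sigma, in_Rstar n r -> exists psi, defines_ranker n psi r) /\
  exists s : seq (fo2 Sigma * ranker Sigma),
    mutually_exclusive (map fst s) /\
    all (fun p => in_FO2n n p.1 && only_x p.1) s /\
    all (fun p => in_Rstar n p.2) s /\
    forall psi : ranker Sigma -> fo2 Sigma,
      (forall r, r \in map snd s -> defines_ranker n (psi r) r) ->
      fo2_equiv phi (big_disj psi s).
Proof.
move=> _ phi_n phi_unique.
split=> [r r_n|]; first by exists (ranker_fo r); apply: ranker_fo_defines.
pose rs := [seq r <- rankers_upto Sigma n | in_Rstar n r].
have rs_n : all (in_Rstar n) rs := filter_all _ _.
exists (decomposition phi rs); split; [|split; [|split]].
- exact: decomposition_mutually_exclusive.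
- by apply: decomposition_formulas; rewrite // phi_n; case: phi_unique.
- by move: rs_n; rewrite -{1}(map_snd_decomposition phi rs) all_map.
move=> psi; rewrite map_snd_decomposition => psi_def w i i_pos.
rewrite sat_decomposition //; last by move=> r /psi_def [_ [_]]; apply.
split=> [phi_i|[] //]; split=> //.
have [r r_n r_i] := unique_position_reached phi_n phi_unique i_pos phi_i.
apply/hasP; exists r; last by rewrite r_i.
by rewrite mem_filter r_n mem_rankers_upto; case/andP: r_n.
Qed.
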